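(* Assume (F), fix $\alpha\in\,]0,1[$, and let $0\le u^+<u^-\le V$ with $\hat\rho_{u^-}\le\check\rho_{u^+}$. Then $$u^--u^+\ \ge\ \frac{\beta}{2}\,\big(\hat\rho_{u^-}-\check\rho_{u^-}\big).$$
   Context: Hypothesis (F): $R>0$; $f\in C^2([0,R];[0,+\infty))$ with $f(\rho)=\rho v(\rho)$, $v\in C^2([0,R];[0,+\infty))$; $f(0)=f(R)=0$; there are $B\ge\beta>0$ with $-B\le f''\le-\beta$ on $[0,R]$; $v'(\rho)<0$ for $\rho\in\,]0,R[$. Let $V:=\max_{[0,R]}v=v(0)$. Define $f_\alpha(\rho):=\alpha f(\rho/\alpha)$ for $\rho\in[0,\alpha R]$. For $u\in[0,V]$: $\tilde\rho_u$ is the unique solution of $f_\alpha'(\rho)=u$; $\varphi_u(\rho):=f_\alpha(\tilde\rho_u)+u(\rho-\tilde\rho_u)$ for $\rho\in[0,R]$; $\mathcal I_u:=\{\rho\in[0,R]: f(\rho)=\varphi_u(\rho)\}$, $\check\rho_u:=\min\mathcal I_u$, $\hat\rho_u:=\max\mathcal I_u$. *)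

From Stdlib Require Import Reals Lra.
Open Scope R_scope.

Definition deriv_within (a b : R) (g : R -> R) (x l : R) : Prop :=
  forall eps, 0 < eps -> exists delta, 0 < delta /\
    forall y, a <= y <= b -> y <> x -> Rabs (y - x) < delta ->
      Rabs ((g y - g x) / (y - x) - l) < eps.

Definition cont_within (a b : R) (g : R -> R) (x : R) : Prop :=
  forall eps, 0 < eps -> exists delta, 0 < delta /\
    forall y, a <= y <= b -> Rabs (y - x) < delta -> Rabs (g y - g x) < eps.

Definition C2_on (a b : R) (g g1 g2 : R -> R) : Prop :=
  (forall x, a <= x <= b -> deriv_within a b g x (g1 x)) /\
  (forall x, a <= x <= b -> deriv_within a b g1 x (g2 x)) /\
  (forall x, a <= x <= b -> cont_within a b g2 x).

Definition HypF (Rm : R) (f f1 f2 v v1 v2 : R -> R) (B beta : R) : Prop :=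
  0 < Rm /\
  C2_on 0 Rm f f1 f2 /\ (forall r, 0 <= r <= Rm -> 0 <= f r) /\
  C2_on 0 Rm v v1 v2 /\ (forall r, 0 <= r <= Rm -> 0 <= v r) /\
  (forall r, 0 <= r <= Rm -> f r = r * v r) /\
  f 0 = 0 /\ f Rm = 0 /\
  B >= beta /\ beta > 0 /\
  (forall r, 0 <= r <= Rm -> - B <= f2 r <= - beta) /\
  (forall r, 0 < r < Rm -> v1 r < 0).

Definition f_alpha (alpha : R) (f : R -> R) (r : R) : R := alpha * f (r / alpha).

Definition is_rho_tilde (Rm alpha : R) (f : R -> R) (u rt : R) : Prop :=
  0 <= rt <= alpha * Rm /\ deriv_within 0 (alpha * Rm) (f_alpha alpha f) rt u.

Definition phi (alpha : R) (f : R -> R) (rt u r : R) : R :=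
  f_alpha alpha f rt + u * (r - rt).

Definition in_I (Rm alpha : R) (f : R -> R) (rt u r : R) : Prop :=
  0 <= r <= Rm /\ f r = phi alpha f rt u r.

Definition is_min_I (Rm alpha : R) (f : R -> R) (rt u m : R) : Prop :=
  in_I Rm alpha f rt u m /\ forall r, in_I Rm alpha f rt u r -> m <= r.

Definition is_max_I (Rm alpha : R) (f : R -> R) (rt u m : R) : Prop :=
  in_I Rm alpha f rt u m /\ forall r, in_I Rm alpha f rt u r -> r <= m.

(* Put x0 := ρ̃_{u+} / alpha, so that u+ = f'(x0).  Since f lies below its
   tangent at x0 and 0 < alpha < 1, the line φ_{u+} lies below f at 0 and above
   f at x0, hence meets the graph of f in [0, x0]: ρ̂_{u-} <= ρ̌_{u+} <= x0, and
   as f' is decreasing, u+ <= f'(ρ̂_{u-}).  On the other hand φ_{u-} is a chord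
   of f of slope u- between ρ̌_{u-} and ρ̂_{u-}, so f'' <= -beta gives
   f'(ρ̂_{u-}) <= u- - beta/2 (ρ̂_{u-} - ρ̌_{u-}). *)

From Stdlib Require Import Reals Lra Psatz.
Open Scope R_scope.

Lemma Rmult_lt_of_lt_div k z eps : 0 < k -> z < eps / k -> k * z < eps.
Proof.
  intros Hk Hz.
  replace eps with (k * (eps / k)) by (field; lra).
  apply Rmult_lt_compat_l; assumption.
Qed.

(** * Calculus on a closed interval *)

(* Functions on [a, b] are extended to R by clamping, which lets the
   standard MVT and IVT of the Reals library apply. *)
Definition clamp (a b x : R) : R := Rmax a (Rmin b x).

Lemma clamp_in a b x : a <= b -> a <= clamp a b x <= b.
Proof. intros; unfold clamp, Rmax, Rmin; repeat destruct Rle_dec; lra. Qed.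

Lemma clamp_id a b x : a <= x <= b -> clamp a b x = x.
Proof. intros; unfold clamp, Rmax, Rmin; repeat destruct Rle_dec; lra. Qed.

Lemma clamp_lipschitz a b x y :
  a <= b -> Rabs (clamp a b y - clamp a b x) <= Rabs (y - x).
Proof.
  intros; unfold clamp, Rmax, Rmin, Rabs.
  repeat destruct Rle_dec; repeat destruct Rcase_abs; lra.
Qed.

Lemma continuity_pt_clamp a b g x : a <= b -> a <= x <= b ->
  cont_within a b g x -> continuity_pt (fun t => g (clamp a b t)) x.
Proof.
  intros Hab Hx Hc eps Heps.
  destruct (Hc eps Heps) as [d [Hd H]].
  exists d; split; [lra|].
  intros y [_ Hy]; simpl in *; unfold R_dist in *.
  pose proof (clamp_lipschitz a b x y Hab).
  rewrite (clamp_id a b x Hx) in *.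
  apply H; [apply clamp_in |]; lra.
Qed.

Lemma derivable_pt_lim_clamp a b g x l : a < x < b ->
  deriv_within a b g x l -> derivable_pt_lim (fun t => g (clamp a b t)) x l.
Proof.
  intros Hx Hd eps Heps.
  destruct (Hd eps Heps) as [d [Hdp H]].
  set (m := Rmin d (Rmin (x - a) (b - x))).
  assert (Hm : 0 < m) by (unfold m; repeat apply Rmin_pos; lra).
  assert (Hmd := Rmin_l d (Rmin (x - a) (b - x))).
  assert (Hmi := Rmin_r d (Rmin (x - a) (b - x))).
  pose proof (Rmin_l (x - a) (b - x)); pose proof (Rmin_r (x - a) (b - x)).
  exists (mkposreal m Hm); intros h Hh Hhm; simpl in Hhm.
  assert (Hh' : - m < h < m) by (unfold Rabs in Hhm; destruct Rcase_abs; lra).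
  rewrite (clamp_id a b (x + h)), (clamp_id a b x) by (unfold m in *; lra).
  specialize (H (x + h)); replace (x + h - x) with h in H by ring.
  apply H; [unfold m in *; lra | intro; apply Hh; lra | unfold m in *; lra].
Qed.

Lemma deriv_within_cont_within a b g x l :
  deriv_within a b g x l -> cont_within a b g x.
Proof.
  intros Hd eps Heps.
  destruct (Hd 1 Rlt_0_1) as [d [Hdp H]].
  assert (Hl : 0 < Rabs l + 1) by (pose proof (Rabs_pos l); lra).
  exists (Rmin d (eps / (Rabs l + 1))); split.
  { apply Rmin_pos; [lra | apply Rdiv_lt_0_compat; lra]. }
  intros y Hy Hyx.
  pose proof (Rmin_l d (eps / (Rabs l + 1))).
  pose proof (Rmin_r d (eps / (Rabs l + 1))).
  destruct (Req_dec y x) as [-> | Hne].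
  { rewrite Rminus_diag, Rabs_R0; lra. }
  specialize (H y Hy Hne ltac:(lra)).
  set (q := (g y - g x) / (y - x)) in H.
  replace (g y - g x) with (q * (y - x)) by (unfold q; field; lra).
  assert (Hq : Rabs q <= Rabs l + 1).
  { replace q with ((q - l) + l) by ring.
    pose proof (Rabs_triang (q - l) l); lra. }
  rewrite Rabs_mult.
  pose proof (Rmult_lt_of_lt_div (Rabs l + 1) (Rabs (y - x)) eps Hl ltac:(lra)).
  pose proof (Rabs_pos (y - x)); nra.
Qed.

Lemma deriv_within_subinterval a b a' b' g x l : a <= a' -> b' <= b ->
  deriv_within a b g x l -> deriv_within a' b' g x l.
Proof.
  intros Ha Hb Hd eps Heps.
  destruct (Hd eps Heps) as [d [Hdp H]].
  exists d; split; [lra |]; intros y Hy; apply H; lra.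
Qed.

Lemma deriv_within_plus a b g h x l m :
  deriv_within a b g x l -> deriv_within a b h x m ->
  deriv_within a b (fun t => g t + h t) x (l + m).
Proof.
  intros Hg Hh eps Heps.
  destruct (Hg (eps / 2) ltac:(lra)) as [d1 [Hd1 H1]].
  destruct (Hh (eps / 2) ltac:(lra)) as [d2 [Hd2 H2]].
  exists (Rmin d1 d2); split; [apply Rmin_pos; lra |].
  intros y Hy Hne Hyd.
  pose proof (Rmin_l d1 d2); pose proof (Rmin_r d1 d2).
  specialize (H1 y Hy Hne ltac:(lra)); specialize (H2 y Hy Hne ltac:(lra)).
  replace ((g y + h y - (g x + h x)) / (y - x) - (l + m)) with
    (((g y - g x) / (y - x) - l) + ((h y - h x) / (y - x) - m))
    by (field; lra).
  pose proof (Rabs_triang ((g y - g x) / (y - x) - l) ((h y - h x) / (y - x) - m)).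
  lra.
Qed.

Lemma deriv_within_quadratic a b x0 p q r x :
  deriv_within a b (fun t => p + q * (t - x0) + r * ((t - x0) * (t - x0))) x
    (q + 2 * r * (x - x0)).
Proof.
  intros eps Heps.
  assert (Hr : 0 < Rabs r + 1) by (pose proof (Rabs_pos r); lra).
  exists (eps / (Rabs r + 1)); split; [apply Rdiv_lt_0_compat; lra |].
  intros y Hy Hne Hyd.
  match goal with |- Rabs ?e < _ => replace e with (r * (y - x)) by (field; lra) end.
  rewrite Rabs_mult.
  pose proof (Rmult_lt_of_lt_div (Rabs r + 1) (Rabs (y - x)) eps Hr Hyd).
  pose proof (Rabs_pos (y - x)); nra.
Qed.

Lemma deriv_within_unique a b g x l1 l2 : a < b -> a <= x <= b ->
  deriv_within a b g x l1 -> deriv_within a b g x l2 -> l1 = l2.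
Proof.
  intros Hab Hx H1 H2.
  destruct (Req_dec l1 l2) as [| Hne]; [assumption | exfalso].
  set (e := Rabs (l1 - l2) / 2).
  assert (He : 0 < e) by (unfold e; pose proof (Rabs_pos_lt (l1 - l2)); lra).
  destruct (H1 e He) as [d1 [Hd1 K1]]; destruct (H2 e He) as [d2 [Hd2 K2]].
  set (m := Rmin d1 (Rmin d2 (b - a)) / 2).
  pose proof (Rmin_l d1 (Rmin d2 (b - a))); pose proof (Rmin_r d1 (Rmin d2 (b - a))).
  pose proof (Rmin_l d2 (b - a)); pose proof (Rmin_r d2 (b - a)).
  assert (0 < Rmin d1 (Rmin d2 (b - a))) by (repeat apply Rmin_pos; lra).
  assert (Hm : 0 < m) by (unfold m; lra).
  assert (Hy : exists y, a <= y <= b /\ Rabs (y - x) = m).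
  { destruct (Rle_dec (x + m) b).
    - exists (x + m); split; [unfold m in *; lra |].
      replace (x + m - x) with m by ring; apply Rabs_pos_eq; lra.
    - exists (x - m); split; [unfold m in *; lra |].
      replace (x - m - x) with (- m) by ring; rewrite Rabs_Ropp; apply Rabs_pos_eq; lra. }
  destruct Hy as [y [Hy Hyx]].
  assert (Hne' : y <> x) by (intro; subst; rewrite Rminus_diag, Rabs_R0 in Hyx; lra).
  specialize (K1 y Hy Hne' ltac:(unfold m in *; lra)).
  specialize (K2 y Hy Hne' ltac:(unfold m in *; lra)).
  set (q := (g y - g x) / (y - x)) in *.
  assert (Rabs (l1 - l2) <= Rabs (q - l2) + Rabs (q - l1)).
  { replace (l1 - l2) with ((q - l2) + - (q - l1)) by ring.
    rewrite <- (Rabs_Ropp (q - l1)); apply Rabs_triang. }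
  unfold e in *; lra.
Qed.

Lemma cont_within_sub_affine a b g x p q x0 : cont_within a b g x ->
  cont_within a b (fun t => g t - (p + q * (t - x0))) x.
Proof.
  intros Hc eps Heps.
  destruct (Hc (eps / 2) ltac:(lra)) as [d [Hd H]].
  assert (Hq : 0 < Rabs q + 1) by (pose proof (Rabs_pos q); lra).
  exists (Rmin d (eps / 2 / (Rabs q + 1))); split.
  { apply Rmin_pos; [lra | apply Rdiv_lt_0_compat; lra]. }
  intros y Hy Hyx.
  pose proof (Rmin_l d (eps / 2 / (Rabs q + 1))).
  pose proof (Rmin_r d (eps / 2 / (Rabs q + 1))).
  specialize (H y Hy ltac:(lra)).
  pose proof (Rmult_lt_of_lt_div (Rabs q + 1) (Rabs (y - x)) (eps / 2) Hq ltac:(lra)).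
  pose proof (Rabs_pos (y - x)).
  replace (g y - (p + q * (y - x0)) - (g x - (p + q * (x - x0))))
    with ((g y - g x) + - (q * (y - x))) by ring.
  pose proof (Rabs_triang (g y - g x) (- (q * (y - x)))).
  rewrite Rabs_Ropp, Rabs_mult in *; lra.
Qed.

Lemma MVT_within a b g g1 : a < b ->
  (forall x, a <= x <= b -> deriv_within a b g x (g1 x)) ->
  exists c, a < c < b /\ g b - g a = g1 c * (b - a).
Proof.
  intros Hab Hd.
  set (e := fun t => g (clamp a b t)).
  assert (He : forall c, a < c < b -> derivable_pt_lim e c (g1 c)).
  { intros; apply derivable_pt_lim_clamp; [| apply Hd]; lra. }
  assert (pr1 : forall c, a < c < b -> derivable_pt e c)
    by (intros c Hc; exact (exist _ (g1 c) (He c Hc))).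
  assert (pr2 : forall c, a < c < b -> derivable_pt id c)
    by (intros; apply derivable_pt_id).
  destruct (MVT e id a b pr1 pr2 Hab) as [c [P E]].
  - intros c Hc; apply continuity_pt_clamp; [lra | lra |].
    apply deriv_within_cont_within with (g1 c); apply Hd; assumption.
  - intros; apply derivable_continuous_pt, derivable_pt_id.
  - exists c; split; [assumption |].
    rewrite (derive_pt_eq_0 e c (g1 c) (pr1 c P) (He c P)),
      (derive_pt_eq_0 id c 1 (pr2 c P) (derivable_pt_lim_id c)) in E.
    unfold e, id in E; rewrite !clamp_id in E by lra; lra.
Qed.

Lemma IVT_within a b g : a <= b ->
  (forall x, a <= x <= b -> cont_within a b g x) ->
  g a <= 0 -> 0 <= g b -> exists z, a <= z <= b /\ g z = 0.
Proof.
  intros Hab Hc Ha Hb.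
  destruct (Req_dec (g a) 0) as [Ea | Na]; [exists a; split; [lra | assumption] |].
  destruct (Req_dec (g b) 0) as [Eb | Nb]; [exists b; split; [lra | assumption] |].
  assert (Hlt : a < b) by (destruct (Req_dec a b); [subst; lra | lra]).
  destruct (Ranalysis5.IVT_interv (fun t => g (clamp a b t)) a b) as [z [Hz Ez]];
    [| assumption | rewrite clamp_id; lra | rewrite clamp_id; lra |].
  - intros x Hx; apply continuity_pt_clamp; auto.
  - rewrite clamp_id in Ez by assumption; exists z; auto.
Qed.

(** * Strongly concave functions *)

Section StrongConcavity.

Variables (a b beta : R) (g g1 g2 : R -> R).
Hypothesis g_deriv : forall x, a <= x <= b -> deriv_within a b g x (g1 x).
Hypothesis g1_deriv : forall x, a <= x <= b -> deriv_within a b g1 x (g2 x).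
Hypothesis g2_le : forall x, a <= x <= b -> g2 x <= - beta.

Lemma deriv_slope_le x y : a <= x -> x <= y -> y <= b ->
  g1 y - g1 x <= - beta * (y - x).
Proof.
  intros Hax Hxy Hyb.
  destruct (Req_dec x y) as [<- | Hne]; [lra |].
  destruct (MVT_within x y g1 g2) as [c [Hc ->]]; [lra | |].
  - intros t Ht; apply (deriv_within_subinterval a b); [lra | lra | apply g1_deriv; lra].
  - assert (g2 c <= - beta) by (apply g2_le; lra); nra.
Qed.

(* The auxiliary function t |-> g t - g1 x (t - x) + beta/2 (t - x)^2 has a
   derivative of sign (x - t), so it is maximal at x. *)
Lemma le_tangent_sub_quadratic x y : a <= x <= b -> a <= y <= b ->
  g y <= g x + g1 x * (y - x) - beta / 2 * ((y - x) * (y - x)).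
Proof.
  intros Hx Hy.
  set (k := fun t => g t + (0 + - g1 x * (t - x) + beta / 2 * ((t - x) * (t - x)))).
  set (k1 := fun t => g1 t + (- g1 x + 2 * (beta / 2) * (t - x))).
  assert (Hk : forall s t, a <= s -> s < t -> t <= b ->
    exists c, s < c < t /\ k t - k s = k1 c * (t - s)).
  { intros s t Hs Hst Ht; apply MVT_within; [assumption |].
    intros r Hr; apply deriv_within_plus.
    - apply (deriv_within_subinterval a b); [lra | lra | apply g_deriv; lra].
    - apply deriv_within_quadratic. }
  destruct (Rtotal_order y x) as [Hyx | [-> | Hxy]]; [| lra |].
  - destruct (Hk y x) as [c [Hc E]]; [lra | assumption | lra |].
    pose proof (deriv_slope_le c x ltac:(lra) ltac:(lra) ltac:(lra)).
    unfold k, k1 in E; nra.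
  - destruct (Hk x y) as [c [Hc E]]; [lra | assumption | lra |].
    pose proof (deriv_slope_le x c ltac:(lra) ltac:(lra) ltac:(lra)).
    unfold k, k1 in E; nra.
Qed.

Lemma deriv_le_chord_slope x y u : a <= x -> x < y -> y <= b ->
  g y - g x = u * (y - x) -> g1 y <= u - beta / 2 * (y - x).
Proof.
  intros Hax Hxy Hyb Hchord.
  pose proof (le_tangent_sub_quadratic y x ltac:(lra) ltac:(lra)).
  apply Rmult_le_reg_r with (y - x); nra.
Qed.

End StrongConcavity.

Lemma deriv_within_f_alpha Rm alpha f f1 rt : 0 < alpha ->
  deriv_within 0 Rm f (rt / alpha) (f1 (rt / alpha)) ->
  deriv_within 0 (alpha * Rm) (f_alpha alpha f) rt (f1 (rt / alpha)).
Proof.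
  intros Ha Hd eps Heps.
  destruct (Hd eps Heps) as [d [Hdp H]].
  exists (alpha * d); split; [nra |].
  intros y Hy Hne Hyd; unfold f_alpha.
  replace ((alpha * f (y / alpha) - alpha * f (rt / alpha)) / (y - rt)) with
    ((f (y / alpha) - f (rt / alpha)) / (y / alpha - rt / alpha))
    by (field; repeat split; try lra; intro; apply Hne; nra).
  assert (Hinv : 0 < / alpha) by (apply Rinv_0_lt_compat; lra).
  assert (Ediv : forall z, z / alpha = z * / alpha) by reflexivity.
  apply H.
  - rewrite Ediv; split; [nra |].
    apply Rmult_le_reg_l with alpha; [lra |].
    replace (alpha * (y * / alpha)) with y by (field; lra); lra.
  - intro E; apply Hne; rewrite !Ediv in E; apply Rmult_eq_reg_r in E; lra.
  - replace (y / alpha - rt / alpha) with ((y - rt) * / alpha) by (field; lra).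
    rewrite Rabs_mult, (Rabs_pos_eq (/ alpha)) by lra.
    apply Rmult_lt_reg_l with alpha; [lra |].
    replace (alpha * (Rabs (y - rt) * / alpha)) with (Rabs (y - rt)) by (field; lra).
    lra.
Qed.

Lemma rho_tilde_slope Rm alpha f f1 u rt : 0 < Rm -> 0 < alpha ->
  (forall x, 0 <= x <= Rm -> deriv_within 0 Rm f x (f1 x)) ->
  is_rho_tilde Rm alpha f u rt -> 0 <= rt / alpha <= Rm /\ u = f1 (rt / alpha).
Proof.
  intros HR Ha Hd [Hrt Hdu].
  assert (Hx : 0 <= rt / alpha <= Rm).
  { split; [apply Rmult_le_pos; [lra | apply Rlt_le, Rinv_0_lt_compat; lra] |].
    apply Rmult_le_reg_l with alpha; [lra |].
    replace (alpha * (rt / alpha)) with rt by (field; lra); lra. }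
  split; [assumption |].
  apply (deriv_within_unique 0 (alpha * Rm) (f_alpha alpha f) rt); [nra | lra | assumption |].
  apply deriv_within_f_alpha; [lra | apply Hd; assumption].
Qed.

(* φ_u lies below f at 0 and above f at x0 = ρ̃_u / alpha. *)
Lemma min_I_le_rescaled_rho_tilde Rm alpha f f1 u rt chk :
  0 < alpha < 1 -> 0 <= rt / alpha <= Rm ->
  (forall x, 0 <= x <= Rm -> deriv_within 0 Rm f x (f1 x)) ->
  f 0 = 0 -> f 0 <= f (rt / alpha) - f1 (rt / alpha) * (rt / alpha) ->
  u = f1 (rt / alpha) -> is_min_I Rm alpha f rt u chk -> chk <= rt / alpha.
Proof.
  intros Ha Hx0 Hd Hf0 Htan Hu [_ Hmin].
  set (x0 := rt / alpha) in *.
  assert (Hrt : rt = alpha * x0) by (unfold x0; field; lra).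
  set (h := fun t => f t - (f_alpha alpha f rt + u * (t - rt))).
  assert (Hfa : f_alpha alpha f rt = alpha * f x0)
    by (unfold f_alpha, x0; reflexivity).
  destruct (IVT_within 0 x0 h) as [z [Hz Ez]]; [lra | | | |].
  - intros t Ht; apply cont_within_sub_affine.
    apply deriv_within_cont_within with (f1 t).
    apply (deriv_within_subinterval 0 Rm); [lra | lra | apply Hd; lra].
  - unfold h; rewrite Hfa, Hf0, Hrt; nra.
  - unfold h; rewrite Hfa, Hrt; nra.
  - apply Rle_trans with z; [apply Hmin; split; [lra | unfold phi, h in *; lra] | lra].
Qed.

Theorem mainTheorem4
  (Rm : R) (f f1 f2 v v1 v2 : R -> R) (B beta : R)
  (HF : HypF Rm f f1 f2 v v1 v2 B beta)
  (alpha : R) (Halpha : 0 < alpha < 1)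
  (up um : R) (Hu : 0 <= up < um /\ um <= v 0)
  (rtp rtm : R)
  (Hrtp : is_rho_tilde Rm alpha f up rtp)
  (Hrtm : is_rho_tilde Rm alpha f um rtm)
  (chk_m hat_m chk_p : R)
  (Hchk_m : is_min_I Rm alpha f rtm um chk_m)
  (Hhat_m : is_max_I Rm alpha f rtm um hat_m)
  (Hchk_p : is_min_I Rm alpha f rtp up chk_p)
  (Hord : hat_m <= chk_p) :
  um - up >= beta / 2 * (hat_m - chk_m).
Proof.
  destruct HF as [HR [[Hf [Hf1 _]] [_ [_ [_ [_ [Hf0 [_ [_ [Hbeta [Hf2_bounds _]]]]]]]]]]].
  assert (Hf2 : forall r, 0 <= r <= Rm -> f2 r <= - beta) by (intros r Hr; apply Hf2_bounds, Hr).
  set (x0 := rtp / alpha).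
  destruct (rho_tilde_slope Rm alpha f f1 up rtp HR ltac:(lra) Hf Hrtp) as [Hx0 Hup].
  fold x0 in Hx0, Hup.
  assert (Hchk_p_le : chk_p <= x0).
  { apply (min_I_le_rescaled_rho_tilde Rm alpha f f1 up rtp); auto.
    pose proof (le_tangent_sub_quadratic 0 Rm beta f f1 f2 Hf Hf1 Hf2 x0 0 Hx0 ltac:(lra)).
    fold x0; nra. }
  destruct Hchk_m as [[Hchk_m_in Hchk_m_eq] Hchk_m_min].
  destruct Hhat_m as [[Hhat_m_in Hhat_m_eq] _].
  destruct Hchk_p as [[Hchk_p_in _] _].
  assert (Hle : chk_m <= hat_m) by (apply Hchk_m_min; split; assumption).
  destruct (Req_dec chk_m hat_m) as [-> | Hne]; [lra |].
  assert (Hslope_hat : f1 hat_m <= um - beta / 2 * (hat_m - chk_m)).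
  { apply (deriv_le_chord_slope 0 Rm beta f f1 f2 Hf Hf1 Hf2); try lra.
    unfold phi in *; lra. }
  pose proof (deriv_slope_le 0 Rm beta f1 f2 Hf1 Hf2 hat_m chk_p ltac:(lra) Hord ltac:(lra)).
  pose proof (deriv_slope_le 0 Rm beta f1 f2 Hf1 Hf2 chk_p x0 ltac:(lra) Hchk_p_le ltac:(lra)).
  nra.
Qed.
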